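(* Let $(B,+,\circ)$ be a left brace with Yang–Baxter map $r$, and let $X\subseteq B$ be such that $(X,r)$ is a nondegenerate involutive solution of the set-theoretic Yang–Baxter equation. Let $c\in B$ be central in the group $(B,\circ)$. (1) If the map $k_1(x)=c\circ x-c$ satisfies $k_1(X)\subseteq X$, then $k_1:X\to X$ is $\mathcal G(X,r)$-equivariant. (2) If the map $k_2(x)=c\circ x+c$ satisfies $k_2(X)\subseteq X$, then $k_2:X\to X$ is $\mathcal G(X,r)$-equivariant if and only if $2\,(c\circ x)=2x+2c$ for all $x\in X$.
   Context: A (left) brace is a triple $(B,+,\circ)$ such that $(B,+)$ is an abelian group with identity $0$, $(B,\circ)$ is a group, and $x\circ(y+z)=x\circ y+x\circ z-x$ for all $x,y,z\in B$; the inverse of $x$ in $(B,\circ)$ is written $x^{-1}$. The Yang–Baxter map of the brace is $r(x,y)=(\sigma_x(y),\tau_y(x))$ with $\sigma_x(y)=x\circ y-x$ and $\tau_y(x)=(\sigma_x(y))^{-1}\circ x-(\sigma_x(y))^{-1}$. For $X\subseteq B$, $(X,r)$ being a solution of the set-theoretic Yang–Baxter equation means $r(X\times X)\subseteq X\times X$ and the restriction of $r$ to $X\times X$ satisfies $(\mathrm{id}\times r)(r\times\mathrm{id})(\mathrm{id}\times r)=(r\times\mathrm{id})(\mathrm{id}\times r)(r\times\mathrm{id})$; it is involutive if $r^2=\mathrm{id}$ on $X\times X$, and nondegenerate if each $\sigma_x$ and each $\tau_y$ ($x,y\in X$) restricts to a bijection $X\to X$. A map $k:X\to X$ is $\mathcal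 G(X,r)$-equivariant if $k\sigma_x=\sigma_x k$ on $X$ for all $x\in X$. *)

From HB Require Import structures.
From mathcomp Require Import all_boot all_algebra.
Set Implicit Arguments. Unset Strict Implicit. Unset Printing Implicit Defensive.
Import GRing.Theory.
Local Open Scope ring_scope.

Definition is_left_brace (B : zmodType) (circ : B -> B -> B) (one : B)
  (inv : B -> B) : Prop :=
  [/\ (forall x y z, circ x (circ y z) = circ (circ x y) z),
      (forall x, circ one x = x /\ circ x one = x),
      (forall x, circ x (inv x) = one /\ circ (inv x) x = one)
    & (forall x y z, circ x (y + z) = circ x y + circ x z - x)].

Section YB.
Variables (B : zmodType) (circ : B -> B -> B) (inv : B -> B).

Definition sigma (x y : B) : B := circ x y - x.
Definition tau (y x : B) : B :=
  circ (inv (sigma x y)) x - inv (sigma x y).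
Definition ybmap (p : B * B) : B * B := (sigma p.1 p.2, tau p.2 p.1).

Definition r12 (t : B * B * B) : B * B * B :=
  let: (a, b, c) := t in let: (a', b') := ybmap (a, b) in (a', b', c).
Definition r23 (t : B * B * B) : B * B * B :=
  let: (a, b, c) := t in let: (b', c') := ybmap (b, c) in (a, b', c').

Definition bijective_on (X : B -> Prop) (f : B -> B) : Prop :=
  [/\ (forall x, X x -> X (f x)),
      (forall x y, X x -> X y -> f x = f y -> x = y)
    & (forall y, X y -> exists x, X x /\ f x = y)].

Definition is_solution (X : B -> Prop) : Prop :=
  (forall x y, X x -> X y -> X (ybmap (x, y)).1 /\ X (ybmap (x, y)).2) /\
  (forall x y z, X x -> X y -> X z ->
     r23 (r12 (r23 (x, y, z))) = r12 (r23 (r12 (x, y, z)))).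

Definition is_involutive (X : B -> Prop) : Prop :=
  forall x y, X x -> X y -> ybmap (ybmap (x, y)) = (x, y).

Definition is_nondegenerate (X : B -> Prop) : Prop :=
  forall x, X x -> bijective_on X (sigma x) /\ bijective_on X (tau x).

Definition equivariant (X : B -> Prop) (k : B -> B) : Prop :=
  forall x y, X x -> X y -> k (sigma x y) = sigma x (k y).

End YB.

(* In a left brace the maps λ_x(y) = x∘y - x (written [sigma x]) are additive
   and satisfy λ_(a∘b) = λ_a λ_b, so λ_c commutes with every λ_x when c is
   central.  Now k_1 = λ_c, and k_2 = λ_c + 2c, whence
   k_2(λ_x y) - λ_x(k_2 y) = 2c - 2λ_x(c): k_2 is equivariant iff
   2(x∘c - x) = 2c for all x in X. *)
From Pilot Require Import Defs.
From mathcomp Require Import all_boot all_algebra.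
Set Implicit Arguments. Unset Strict Implicit. Unset Printing Implicit Defensive.
Import GRing.Theory.
Local Open Scope ring_scope.

Section BraceSigma.
Variables (B : zmodType) (circ : B -> B -> B).
Hypothesis circA : forall x y z, circ x (circ y z) = circ (circ x y) z.
Hypothesis circDr : forall x y z, circ x (y + z) = circ x y + circ x z - x.

Local Notation sigma := (sigma circ).

Lemma circBr x a b : circ x (a - b) = circ x a - circ x b + x.
Proof.
have := circDr x (a - b) b; rewrite subrK => ->.
by rewrite (addrAC _ (- x)) addrK subrK.
Qed.

Lemma sigmaD x a b : sigma x (a + b) = sigma x a + sigma x b.
Proof. by rewrite /Defs.sigma circDr addrACA addrA. Qed.

Lemma sigmar0 x : sigma x 0 = 0.
Proof.
have := sigmaD x 0 0; rewrite addr0 -{1}[sigma x 0]addr0.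
by move/addrI/esym.
Qed.

Lemma sigmaMn x a n : sigma x (a *+ n) = sigma x a *+ n.
Proof.
elim: n => [|n IHn]; first exact: sigmar0.
by rewrite !mulrS sigmaD IHn.
Qed.

Lemma sigmaM a b y : sigma (circ a b) y = sigma a (sigma b y).
Proof. by rewrite /Defs.sigma circBr circA addrK. Qed.

Lemma sigma_central_comm c x y :
  (forall z, circ c z = circ z c) -> sigma c (sigma x y) = sigma x (sigma c y).
Proof. by move=> cC; rewrite -!sigmaM cC. Qed.

Lemma equivariant_sigma_central (X : B -> Prop) c :
  (forall z, circ c z = circ z c) -> equivariant circ X (sigma c).
Proof. by move=> cC x y _ _; apply: sigma_central_comm. Qed.

Lemma equivariant_sigma_shiftP (X : B -> Prop) c d (k : B -> B) :
  (forall z, circ c z = circ z c) -> (forall y, k y = sigma c y + d) ->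
  equivariant circ X k <-> (forall x, X x -> sigma x d = d).
Proof.
move=> cC kE.
have equiv_at x y : k (sigma x y) = sigma x (k y) <-> sigma x d = d.
  rewrite !kE sigmaD sigma_central_comm //.
  by split=> [/addrI | ->].
split=> [keq x Xx | dfix x y Xx _]; first exact/(equiv_at x x)/keq.
exact/equiv_at/dfix.
Qed.

End BraceSigma.

Theorem mainTheorem3 (B : zmodType) (circ : B -> B -> B) (one : B)
  (inv : B -> B) (X : B -> Prop) (c : B) :
  is_left_brace circ one inv ->
  is_solution circ inv X -> is_involutive circ inv X ->
  is_nondegenerate circ inv X ->
  (forall x, circ c x = circ x c) ->
  ((forall x, X x -> X (circ c x - c)) ->
     equivariant circ X (fun x => circ c x - c)) /\
  ((forall x, X x -> X (circ c x + c)) ->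
     (equivariant circ X (fun x => circ c x + c) <->
      (forall x, X x -> (circ c x) *+ 2 = x *+ 2 + c *+ 2))).
Proof.
move=> [circA _ _ circDr] _ _ _ cC.
split=> [_|_]; first exact: equivariant_sigma_central circA circDr X c cC.
have k2E y : circ c y + c = sigma circ c y + c *+ 2.
  by rewrite /sigma mulr2n addrA subrK.
apply: iff_trans (equivariant_sigma_shiftP circA circDr X cC k2E) _.
have fixes_2c x : sigma circ x (c *+ 2) = c *+ 2 <-> circ c x *+ 2 = x *+ 2 + c *+ 2.
  rewrite (sigmaMn circDr) /sigma cC mulrnBl.
  split=> [/eqP | ->]; last by rewrite addrC addKr.
  by rewrite subr_eq addrC => /eqP.
by split=> H x Xx; apply/fixes_2c/H.
Qed.
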